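(* Let $k\ge 2$, $m\in\{1,\dots,k-1\}$ and $\alpha\in(0,1)$. Let $\theta_1\ge\theta_2\ge\dots\ge\theta_k$ be real parameters, and let $(\hat{\mathcal S}_T)_{T\ge 0}$ be the sequence of sets produced by the Sequential Correct Screening (SCS) procedure described in the context, built from confidence processes $L_{iT}(\cdot),U_{iT}(\cdot)$ satisfying the time-uniform guarantee ( * ) and $L_{iT}(\beta)\le U_{iT}(\beta)$. Then: (a) $\mathbb P\big(\forall T\in\mathbb N:\ \hat{\mathcal S}_T\subseteq \hat{\mathcal S}_{T-1}\big)=1$. (b) If $\theta_m>\theta_{m+1}$ (so that $\mathcal S=\{1,\dots,m\}$), then $\mathbb P\big(\forall T\in\mathbb N:\ \mathcal S\subseteq\hat{\mathcal S}_T\big)\ge 1-\alpha$. (c) If $\theta_m>\theta_{m+1}$ and, in addition, for every $i\in[k]$ and every $\beta\in(0,1)$ we have $U_{iT}(\beta)\to\theta_i$ and $L_{iT}(\beta)\to\theta_i$ in probability as $T\to\infty$, then $\mathbb P\big(\exists T_0\in\mathbb N\ \forall T\ge T_0:\ \hat{\mathcal S}_T=\mathcal S\big)\ge 1-\alpha$.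
   Context: Setting: $(\Omega,\mathcal F,\mathbb P)$ is a probability space with a filtration $(\mathcal F_T)_{T\in\mathbb N}$, $\mathbb N=\{1,2,\dots\}$, and $[k]=\{1,\dots,k\}$. The $m$-promising set is $\mathcal S=\{i\in[k]:\theta_i\ge\theta_m\}$. For each $i\in[k]$ and each $\beta\in(0,1)$, we are given two $(\mathcal F_T)$-adapted processes $(L_{iT}(\beta))_{T\in\mathbb N}$ and $(U_{iT}(\beta))_{T\in\mathbb N}$ with values in $[-\infty,\infty]$, such that $L_{iT}(\beta)\le U_{iT}(\beta)$ for all $T$, and satisfying the time-uniform guarantee ( * ) $\mathbb P(\exists T\in\mathbb N:\theta_i\le L_{iT}(\beta))\le\beta$ and $\mathbb P(\exists T\in\mathbb N:\theta_i\ge U_{iT}(\beta))\le\beta$. No assumption is made on the dependence between the processes for different $i$. SCS procedure: set $\alpha_{km}=\alpha/\{2m(k-m)\}$ and $\hat{\mathcal S}_0=[k]$. For $T\in\mathbb N$, let $L^{(m)}_T(\alpha_{km})$ be the $m$-th largest value (counting multiplicity) among $\{L_{iT}(\alpha_{km}):i\in\hat{\mathcal S}_{T-1}\}$, and set $\hat{\mathcal S}_T=\hat{\mathcal S}_{T-1}\setminus\{i\in\hat{\mathcal S}_{T-1}:U_{iT}(\alpha_{km})<L^{(m)}_T(\alpha_{km})\}$. (Under $L\le U$, this keeps $|\hat{\mathcal S}_T|\ge m$ for all $T$, so the $m$-th largest value is always defined.) *)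

From HB Require Import structures.
From mathcomp Require Import all_boot all_order all_algebra.
From mathcomp Require Import all_classical all_reals all_analysis measurable_realfun.
Set Implicit Arguments. Unset Strict Implicit. Unset Printing Implicit Defensive.
Import Order.TTheory GRing.Theory Num.Theory.
Local Open Scope ring_scope.

Definition mth_largest (R : realType) (m : nat) (s : seq (\bar R)) : \bar R :=
  nth -oo%E (sort (fun x y => (y <= x)%O) s) m.-1.

(* m-promising set {i : theta_i >= theta_(m)}; indices are 0-based, so the
   paper's theta_j is theta (j-1) here. *)
Definition promising (R : realType) (k m : nat) (theta : nat -> R) : {set 'I_k} :=
  [set i : 'I_k | theta m.-1 <= theta i].

Fixpoint SCS d (Omega : measurableType d) (R : realType) (k m : nat)
  (L U : 'I_k -> R -> nat -> Omega -> \bar R) (a : R) (T : nat) (w : Omega)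
  : {set 'I_k} :=
  match T with
  | 0 => [set: 'I_k]
  | T'.+1 =>
      let S := SCS m L U a T' w in
      let Lm := mth_largest m [seq L i a T'.+1 w | i <- enum S] in
      [set i in S | ~~ (U i a T'.+1 w < Lm)%E]
  end.

Definition alpha_km (R : realType) (k m : nat) (alpha : R) : R :=
  alpha / (2 * m%:R * (k - m)%:R).

Local Open Scope classical_set_scope.

(* A filtration (F_T)_{T >= 1} of sub-sigma-algebras of the measurable sets
   (the index T = 0 is unused). *)
Definition is_filtration d (Omega : measurableType d) (F : nat -> set (set Omega)) :=
  (forall T, (1 <= T)%N -> sigma_algebra setT (F T)) /\
  (forall T, (1 <= T)%N -> F T `<=` measurable) /\
  (forall T, (1 <= T)%N -> F T `<=` F T.+1).

Definition adapted d (Omega : measurableType d) (R : realType)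
  (F : nat -> set (set Omega)) (X : nat -> Omega -> \bar R) :=
  forall T, (1 <= T)%N -> forall B : set (\bar R), measurable B -> F T (X T @^-1` B).

Definition cvg_in_prob d (Omega : measurableType d) (R : realType)
  (P : probability Omega R) (X : nat -> Omega -> \bar R) (c : R) :=
  forall eps : R, 0 < eps ->
    (fun T => P [set w | (eps%:E < `| X T w - c%:E |)%E]) @ \oo --> 0%E.

From HB Require Import structures.
From mathcomp Require Import all_boot all_order all_algebra.
From mathcomp Require Import all_classical all_reals all_analysis measurable_realfun.
From mathcomp Require Import ring lra zify.
Set Implicit Arguments. Unset Strict Implicit. Unset Printing Implicit Defensive.
Import Order.TTheory GRing.Theory Num.Theory.
Local Open Scope ring_scope.

(* Call an arm of S "violated" if its upper bound ever drops to its mean, and an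
   arm outside S if its lower bound ever rises to its mean.  With no violation,
   every lower bound outside S stays below every upper bound inside S, so an arm
   of S can only be beaten by the other #|S| - 1 = m - 1 arms of S and is never
   removed; by the time-uniform guarantee and a union bound over the k arms this
   fails with probability at most k alpha_km <= alpha.  If moreover all bounds
   converge in probability, then almost surely at some time every bound is within
   a third of the gap theta_(m) - theta_(m+1) of its mean; at that time the m
   arms of S beat every other surviving arm, and since the screened sets only
   shrink they equal S from then on. *)

Lemma count_enum (T : finType) (A : {pred T}) (p : pred T) :
  count p (enum A) = #|[predI p & A]|.
Proof. by rewrite -size_filter cardE /enum_mem -filter_predI. Qed.

Lemma card_ord_lt (k m : nat) : (m <= k)%N -> #|[set i : 'I_k | (i < m)%N]| = m.
Proof.
move=> mk; have widen_inj : injective (widen_ord mk).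
  by move=> i j /(congr1 val) ij; apply: val_inj.
rewrite -[RHS]card_ord -(card_imset _ widen_inj).
apply: eq_card => i; rewrite inE; apply/idP/imsetP => [im|[j _ ->]]; last first.
  by rewrite /= ltn_ord.
by exists (Ordinal im) => //; apply: val_inj.
Qed.

Section order_statistic.
Context {disp : Order.disp_t} {T : orderType disp}.

Lemma lt_nth_sorted_ge (x x0 : T) (s : seq T) n :
  (x0 <= x)%O -> sorted >=%O s ->
  (x < nth x0 s n)%O = (n < count (fun y => x < y)%O s)%N.
Proof.
move=> x0x; elim: s n => [|y s IH] n /=; first by rewrite nth_nil ltNge x0x.
move=> sorted_ys; have sorted_s := path_sorted sorted_ys.
have s_le_y : all (>=%O y) s := order_path_min ge_trans sorted_ys.
case: (ltP x y) => [xy|yx]; first by case: n => [|n] /=; rewrite ?xy ?IH.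
have count0_s : count (fun z => x < z)%O s = 0%N.
  apply/eqP; rewrite -leqn0 leqNgt -has_count; apply/hasPn => z zs.
  by rewrite -leNgt (le_trans _ yx) //; move/allP: s_le_y => /(_ z zs).
rewrite count0_s; case: n => [|n] /=; first by rewrite ltNge yx.
by rewrite IH // count0_s.
Qed.

End order_statistic.

Lemma lt_mth_largest (R : realType) (m : nat) (x : \bar R) (s : seq (\bar R)) :
  (1 <= m)%N -> (x < mth_largest m s)%E = (m <= count (fun y => x < y)%E s)%N.
Proof.
move=> m_gt0; rewrite /mth_largest lt_nth_sorted_ge ?leNye //; last first.
  by apply: sort_sorted => a b; rewrite orbC le_total.
by rewrite (permP (permEl (perm_sort _ s))) prednK.
Qed.

Definition screen (k m : nat) (S : {set 'I_k}) (beats : 'I_k -> pred 'I_k) :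
  {set 'I_k} := [set i in S | (count (beats i) (enum S) < m)%N].

Section screen.
Variables (k m : nat) (S A : {set 'I_k}) (beats : 'I_k -> pred 'I_k).

Lemma screen_subset : screen m S beats \subset S.
Proof. by apply/fintype.subsetP => i; rewrite inE => /andP[]. Qed.

Lemma subset_screen : A \subset S -> (#|A| <= m)%N ->
  (forall i j, i \in A -> beats i j -> j \in A :\ i) -> A \subset screen m S beats.
Proof.
move=> AS Am Abeats; apply/fintype.subsetP => i Ai; rewrite inE (fintype.subsetP AS) //=.
rewrite count_enum (@leq_ltn_trans #|A :\ i|) //; last first.
  by rewrite (cardsD1 i A) Ai in Am.
by apply: subset_leq_card; apply/fintype.subsetP => j /andP[/(Abeats i j Ai)].
Qed.

Lemma screen_subset_beaten : A \subset S -> (m <= #|A|)%N ->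
  (forall i j, i \in A -> j \notin A -> beats j i) -> screen m S beats \subset A.
Proof.
move=> AS Am beatsA; apply/fintype.subsetP => j; rewrite inE => /andP[Sj].
apply: contraTT => Aj; rewrite -leqNgt count_enum (leq_trans Am) //.
apply: subset_leq_card; apply/fintype.subsetP => i Ai.
by apply/andP; split; [exact: beatsA | exact: (fintype.subsetP AS)].
Qed.

End screen.

Section SCS.
Variables (d : measure_display) (Omega : measurableType d) (R : realType).
Variables (k m : nat) (L U : 'I_k -> R -> nat -> Omega -> \bar R) (a : R).
Hypothesis m_gt0 : (1 <= m)%N.
Let Shat := SCS m L U a.

Lemma SCS_succ T w :
  Shat T.+1 w = screen m (Shat T w) (fun i j => U i a T.+1 w < L j a T.+1 w)%E.
Proof. by apply/finset.setP => i; rewrite !inE lt_mth_largest // count_map ltnNge. Qed.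

Lemma SCS_subset_pred T w : Shat T.+1 w \subset Shat T w.
Proof. by rewrite SCS_succ; apply: screen_subset. Qed.

Lemma SCS_nonincreasing T T' w : (T <= T')%N -> Shat T' w \subset Shat T w.
Proof.
elim: T' => [|T' IH]; first by rewrite leqn0 => /eqP ->.
rewrite leq_eqVlt ltnS => /orP[/eqP -> //|TT'].
exact: fintype.subset_trans (SCS_subset_pred T' w) (IH TT').
Qed.

Lemma subset_SCS (A : {set 'I_k}) w :
  (forall i T, (L i a T w <= U i a T w)%E) -> (#|A| <= m)%N ->
  (forall T i j, i \in A -> j \notin A -> (L j a T.+1 w <= U i a T.+1 w)%E) ->
  forall T, A \subset Shat T w.
Proof.
move=> LU Am sepA; elim=> [|T IH]; first exact: finset.subsetT.
rewrite SCS_succ; apply: subset_screen => // i j Ai; rewrite ltNge !inE.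
apply: contraNT; rewrite negb_and negbK => /orP[/eqP ->|Aj]; first exact: LU.
by rewrite sepA //; apply: contraNN Aj => ->.
Qed.

Lemma SCS_subset_separated (A : {set 'I_k}) w T :
  (m <= #|A|)%N -> A \subset Shat T w ->
  (forall i j, i \in A -> j \notin A -> (U j a T.+1 w < L i a T.+1 w)%E) ->
  forall T', (T < T')%N -> Shat T' w \subset A.
Proof.
move=> Am A_Shat sepA T' TT'; apply: fintype.subset_trans (SCS_nonincreasing w TT') _.
by rewrite SCS_succ; apply: screen_subset_beaten.
Qed.

End SCS.

Local Open Scope classical_set_scope.

Section finite_valued.
Context d (T : measurableType d).

Lemma measurable_preimage_finType (X : finType) (f : T -> X) (A : set X) :
  (forall x, measurable (f @^-1` [set x])) -> measurable (f @^-1` A).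
Proof.
move=> mf; rewrite (_ : f @^-1` A = \bigcup_(x in A) f @^-1` [set x]).
  exact: fin_bigcup_measurable finite_finset _.
by apply/seteqP; split => [w Afw|w [x Ax fwx]]; [exists (f w) | rewrite /= fwx].
Qed.

Lemma measurable_fibers_pair (X Y : Type) (f : T -> X) (g : T -> Y) :
  (forall x, measurable (f @^-1` [set x])) -> (forall y, measurable (g @^-1` [set y])) ->
  forall xy, measurable ((fun w => (f w, g w)) @^-1` [set xy]).
Proof.
move=> mf mg [x y]; rewrite (_ : _ @^-1` _ = f @^-1` [set x] `&` g @^-1` [set y]).
  exact: measurableI.
by apply/seteqP; split => w /=; [case=> -> ->|case=> -> ->].
Qed.

Lemma measurable_fibers_ffun (I : finType) (f : T -> {ffun I -> bool}) :
  (forall i, measurable [set w | f w i]) -> forall c, measurable (f @^-1` [set c]).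
Proof.
move=> mf c; rewrite (_ : _ @^-1` _ = \bigcap_(i in [set: I]) [set w | f w i = c i]).
  apply: fin_bigcap_measurable finite_finset _ => i _.
  case: (c i); first by rewrite (_ : [set w | _] = [set w | f w i]) //; apply/seteqP.
  rewrite (_ : [set w | _] = ~` [set w | f w i]); first exact/measurableC/mf.
  by apply/seteqP; split => w /=; [move=> -> | move/negP/negbTE].
apply/seteqP; split => [w /= fwc i _|w fc]; first by rewrite /= fwc.
by apply/ffunP => i; exact: fc.
Qed.

End finite_valued.

Section SCS_measurable.
Variables (d : measure_display) (Omega : measurableType d) (R : realType).
Variables (k m : nat) (L U : 'I_k -> R -> nat -> Omega -> \bar R) (a : R).
Hypothesis m_gt0 : (1 <= m)%N.
Hypothesis mL : forall i T, measurable_fun setT (L i a T.+1).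
Hypothesis mU : forall i T, measurable_fun setT (U i a T.+1).

(* [SCS T.+1] is a function of [SCS T] and of the finitely many comparisons
   [U i < L j] at time [T.+1]. *)
Lemma measurable_SCS_fiber T s : measurable (SCS m L U a T @^-1` [set s]).
Proof.
elim: T s => [|T IH] s.
  have [<-|Ts] := eqVneq [set: 'I_k]%SET s.
    by rewrite (_ : _ @^-1` _ = setT) //; apply/seteqP.
  by rewrite (_ : _ @^-1` _ = set0) //; apply/seteqP; split => w //= /eqP; rewrite (negbTE Ts).
pose beats w := [ffun ij : 'I_k * 'I_k => U ij.1 a T.+1 w < L ij.2 a T.+1 w]%E.
pose next (p : {set 'I_k} * {ffun 'I_k * 'I_k -> bool}) :=
  screen m p.1 (fun i j => p.2 (i, j)).
have next_SCS w : next (SCS m L U a T w, beats w) = SCS m L U a T.+1 w.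
  rewrite SCS_succ //; apply/finset.setP => i; rewrite !inE /=.
  by under eq_count do rewrite ffunE.
rewrite (_ : _ @^-1` _ = (fun w => (SCS m L U a T w, beats w)) @^-1` (next @^-1` [set s])).
  apply: measurable_preimage_finType; apply: measurable_fibers_pair => // c.
  apply: measurable_fibers_ffun => -[i j] /=.
  under eq_set do rewrite ffunE /=.
  by rewrite -[X in measurable X]setTI; apply: measurable_lte.
by apply/seteqP; split => w /=; rewrite next_SCS.
Qed.

Lemma measurable_SCS T (A : set {set 'I_k}) : measurable [set w | A (SCS m L U a T w)].
Proof. exact: measurable_preimage_finType (measurable_SCS_fiber T). Qed.

End SCS_measurable.

Definition deviates d (Omega : measurableType d) (R : realType)
    (eps : R) (X : Omega -> \bar R) (c : R) : set Omega :=
  [set w | (eps%:E < `|X w - c%:E|)%E].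

Lemma measurable_deviates d (Omega : measurableType d) (R : realType)
    (eps : R) (f : Omega -> \bar R) (c : R) :
  measurable_fun setT f -> measurable (deviates eps f c).
Proof.
move=> mf; have mdist : measurable_fun setT (fun w => `|f w - c%:E|)%E.
  apply: measurableT_comp; first exact: abse_measurable.
  by apply: emeasurable_funB => //; exact: measurable_cst.
by have := measurable_lte measurableT (measurable_cst eps%:E) mdist; rewrite setTI.
Qed.

Section measure_bounds.
Context d (T : measurableType d) (R : realType).
Local Open Scope ereal_scope.

Lemma measure_fin_bigcup_le (mu : {measure set T -> \bar R}) (I : finType)
    (A : I -> set T) (c : R) :
  (forall i, measurable (A i)) -> (forall i, mu (A i) <= c%:E) ->
  mu (\bigcup_i A i) <= (#|I|%:R * c)%:E.
Proof.
move=> mA muA.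
have -> : \bigcup_i A i = \big[setU/set0]_(i <- enum I) A i.
  rewrite -bigcup_seq; apply/seteqP; split => w [i _ Ai]; exists i => //=.
  by rewrite mem_enum.
rewrite cardT; elim: (enum I) => [|i s IH]; first by rewrite big_nil measure0 mul0r.
rewrite big_cons /= -addn1 natrD mulrDl mul1r EFinD addeC.
apply: le_trans (measureU2 _ _ _) _ => //; first exact: bigsetU_measurable.
exact: leeD (muA i) IH.
Qed.

Lemma measure_bigcap_eq0 (mu : {measure set T -> \bar R}) (A : nat -> set T) :
  (forall n, measurable (A n)) ->
  (forall e : R, (0 < e)%R -> exists n, mu (A n) <= e%:E) ->
  mu (\bigcap_n A n) = 0.
Proof.
move=> mA small; apply/eqP; rewrite eq_le measure_ge0 andbT.
apply/lee_addgt0Pr => e e_gt0; rewrite add0e; have [n muAn] := small e e_gt0.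
apply: le_trans muAn; apply: le_measure; rewrite ?inE //; last by move=> w; apply.
exact: bigcapT_measurable.
Qed.

Lemma probability_ge_compl (P : probability T R) (X Y : set T) (c alpha : R) :
  measurable X -> measurable Y -> ~` X `<=` Y -> P X <= c%:E -> (c <= alpha)%R ->
  (1 - alpha)%:E <= P Y.
Proof.
move=> mX mY XY PX c_alpha.
have PXc : (1 - alpha)%:E <= P (~` X).
  by rewrite probability_setC // EFinB leeB // (le_trans PX) // lee_fin.
by apply: le_trans PXc (le_measure _ _ _ XY); rewrite ?inE //; exact: measurableC.
Qed.

Lemma cvg_in_prob_eventually_lt (P : probability T R) (X : nat -> T -> \bar R)
    (c eps e : R) :
  cvg_in_prob P X c -> (0 < eps)%R -> (0 < e)%R ->
  \forall n \near \oo, P (deviates eps (X n) c) < e%:E.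
Proof.
move=> cvgX eps_gt0 e_gt0.
have e_nbhs0 : nbhs (0 : \bar R) (fun u => u < e%:E) by apply: open_ereal_lt'; rewrite lte_fin.
exact: cvgX _ eps_gt0 _ e_nbhs0.
Qed.

Lemma measurable_exists_pos (Q : nat -> set T) : (forall n, measurable (Q n.+1)) ->
  measurable [set w | exists n, (1 <= n)%N /\ Q n w].
Proof.
move=> mQ; rewrite (_ : [set w | _] = \bigcup_(n in [set n | (0 < n)%N]) Q n).
  by apply: bigcup_measurable => -[].
by apply/seteqP; split => w /= [n]; [case=> n_gt0; exists n | exists n].
Qed.

End measure_bounds.

Lemma abse_subr_le (R : realType) (x : \bar R) (c e : R) :
  ~ (e%:E < `|x - c%:E|)%E -> ((c - e)%:E <= x <= (c + e)%:E)%E.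
Proof.
case: x => [r| |] /=; rewrite ?ltey //; move/negP; rewrite -leNgt lee_fin ler_norml.
by move=> /andP[? ?]; rewrite !lee_fin; apply/andP; split; lra.
Qed.

Section promising.
Variables (R : realType) (k m : nat) (theta : nat -> R).
Hypothesis m_gt0 : (1 <= m)%N.
Hypothesis m_lt_k : (m < k)%N.
Hypothesis theta_nonincr : forall i j : nat, (i <= j)%N -> (j < k)%N -> theta j <= theta i.
Let S := promising k m theta.

Lemma promising_lt (i j : 'I_k) : i \in S -> j \notin S -> theta j < theta i.
Proof. by rewrite !inE -ltNge => /[swap]; exact: lt_le_trans. Qed.

Lemma notin_promising_le (j : 'I_k) : j \notin S -> theta j <= theta m.
Proof.
rewrite inE => Sj; apply: theta_nonincr (ltn_ord j); rewrite leqNgt.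
apply: contra Sj => jm; apply: theta_nonincr; first by rewrite -ltnS prednK.
exact: leq_ltn_trans (leq_pred m) m_lt_k.
Qed.

Lemma card_promising : theta m < theta m.-1 -> #|S| = m.
Proof.
move=> gap; rewrite -(card_ord_lt (ltnW m_lt_k)); apply: eq_card => i; rewrite !inE.
apply/idP/idP => [Si|im]; last first.
  apply: theta_nonincr; first by rewrite -ltnS prednK.
  exact: leq_ltn_trans (leq_pred m) m_lt_k.
by rewrite ltnNge; apply: contraTN Si => mi; rewrite -ltNge (le_lt_trans _ gap) ?theta_nonincr.
Qed.

End promising.

Lemma alpha_km_gt0_lt1 (R : realType) (k m : nat) (alpha : R) :
  (1 <= m)%N -> (m < k)%N -> 0 < alpha < 1 -> 0 < alpha_km k m alpha < 1.
Proof.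
move=> m_gt0 m_lt_k /andP[alpha_gt0 alpha_lt1].
have m_ge1 : 1 <= (m%:R : R) by rewrite ler1n.
have km_ge1 : 1 <= ((k - m)%:R : R) by rewrite ler1n subn_gt0.
have den_gt0 : 0 < 2 * m%:R * (k - m)%:R :> R by rewrite !mulr_gt0 //; lra.
rewrite divr_gt0 //= ltr_pdivrMr //; nra.
Qed.

Lemma alpha_km_union_le (R : realType) (k m : nat) (alpha : R) :
  (1 <= m)%N -> (m < k)%N -> 0 < alpha -> k%:R * alpha_km k m alpha <= alpha.
Proof.
move=> m_gt0 m_lt_k alpha_gt0.
have m_ge1 : 1 <= (m%:R : R) by rewrite ler1n.
have km_ge1 : 1 <= ((k - m)%:R : R) by rewrite ler1n subn_gt0.
have den_gt0 : 0 < 2 * m%:R * (k - m)%:R :> R by rewrite !mulr_gt0 //; lra.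
have -> : (k%:R : R) = m%:R + (k - m)%:R by rewrite -natrD subnKC // ltnW.
have sum_le : m%:R + (k - m)%:R <= 2 * m%:R * (k - m)%:R :> R by nra.
rewrite /alpha_km mulrA ler_pdivrMr //; nra.
Qed.

Lemma adapted_measurable d (Omega : measurableType d) (R : realType)
    (F : nat -> set (set Omega)) (X : nat -> Omega -> \bar R) :
  is_filtration F -> adapted F X -> forall T, measurable_fun setT (X T.+1).
Proof.
move=> [_ [F_meas _]] adX T _ B mB; rewrite setTI.
exact: F_meas _ (adX T.+1 isT B mB).
Qed.

Section screening.
Variables (R : realType) (d : measure_display) (Omega : measurableType d).
Variable P : probability Omega R.
Variables (k m : nat) (theta : nat -> R) (L U : 'I_k -> R -> nat -> Omega -> \bar R).
Variable a : R.
Hypothesis m_gt0 : (1 <= m)%N.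
Hypothesis m_lt_k : (m < k)%N.
Hypothesis theta_nonincr : forall i j : nat, (i <= j)%N -> (j < k)%N -> theta j <= theta i.
Hypothesis gap : theta m < theta m.-1.
Hypothesis LU : forall i T w, (L i a T w <= U i a T w)%E.
Hypothesis mL : forall i T, measurable_fun setT (L i a T.+1).
Hypothesis mU : forall i T, measurable_fun setT (U i a T.+1).
Hypothesis crossing_le : forall i : 'I_k,
  (P [set w | exists T, (1 <= T)%N /\ ((theta i)%:E <= L i a T w)%E] <= a%:E)%E /\
  (P [set w | exists T, (1 <= T)%N /\ ((theta i)%:E >= U i a T w)%E] <= a%:E)%E.
Let S := promising k m theta.
Let Shat := SCS m L U a.

Definition violation (i : 'I_k) : set Omega :=
  if i \in S then [set w | exists T, (1 <= T)%N /\ ((theta i)%:E >= U i a T w)%E]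
  else [set w | exists T, (1 <= T)%N /\ ((theta i)%:E <= L i a T w)%E].

Lemma measurable_violation i : measurable (violation i).
Proof.
rewrite /violation; case: ifP => _; apply: measurable_exists_pos => T.
  by have := measurable_lee measurableT (mU i T) (measurable_cst (theta i)%:E); rewrite setTI.
by have := measurable_lee measurableT (measurable_cst (theta i)%:E) (mL i T); rewrite setTI.
Qed.

Lemma prob_violation_le : (P (\bigcup_i violation i) <= (k%:R * a)%:E)%E.
Proof.
rewrite -[k in k%:R]card_ord; apply: measure_fin_bigcup_le => i.
  exact: measurable_violation.
by rewrite /violation; case: ifP => _; case: (crossing_le i).
Qed.

Lemma separated_of_no_violation w : ~ (\bigcup_i violation i) w ->
  forall T i j, i \in S -> j \notin S -> (L j a T.+1 w < U i a T.+1 w)%E.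
Proof.
move=> no_viol T i j Si Sj.
have Ui : ((theta i)%:E < U i a T.+1 w)%E.
  rewrite ltNge; apply/negP => Ui; apply: no_viol; exists i => //.
  by rewrite /violation Si; exists T.+1.
have Lj : (L j a T.+1 w < (theta j)%:E)%E.
  rewrite ltNge; apply/negP => Lj; apply: no_viol; exists j => //.
  by rewrite /violation (negbTE Sj); exists T.+1.
by apply: lt_trans Lj (lt_trans _ Ui); rewrite lte_fin (promising_lt Si Sj).
Qed.

Let card_S := card_promising m_gt0 m_lt_k theta_nonincr gap.

Lemma promising_subset_SCS w : ~ (\bigcup_i violation i) w -> forall T, S \subset Shat T w.
Proof.
move=> no_viol; apply: subset_SCS => //; first by rewrite card_S.
by move=> T i j Si Sj; apply/ltW/separated_of_no_violation.
Qed.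

Lemma prob_promising_subset_SCS (alpha : R) : k%:R * a <= alpha ->
  ((1 - alpha)%:E <= P [set w | forall T, (1 <= T)%N -> S \subset Shat T w])%E.
Proof.
move=> ka_le; apply: (probability_ge_compl _ _ _ prob_violation_le ka_le).
- exact: fin_bigcup_measurable finite_finset (fun i _ => measurable_violation i).
- rewrite (_ : [set w | _] = \bigcap_T [set w | (1 <= T)%N -> S \subset Shat T w]).
    apply: bigcapT_measurable => T.
    exact: (measurable_SCS m_gt0 mL mU T (fun s => (1 <= T)%N -> S \subset s)).
  by apply/seteqP; split => w /= SShat T; [move=> _|]; apply: SShat.
- by move=> w no_viol T _; apply: promising_subset_SCS.
Qed.

Definition deviation_at (eps : R) (T : nat) : set Omega :=
  \bigcup_i (deviates eps (L i a T) (theta i) `|` deviates eps (U i a T) (theta i)).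

Definition persistent_deviation (eps : R) : set Omega :=
  \bigcap_T deviation_at eps T.+1.

Lemma measurable_deviation_at eps T : measurable (deviation_at eps T.+1).
Proof.
apply: fin_bigcup_measurable finite_finset _ => i _.
by apply: measurableU; exact: measurable_deviates.
Qed.

Lemma measurable_persistent_deviation eps : measurable (persistent_deviation eps).
Proof. exact: bigcapT_measurable (measurable_deviation_at eps). Qed.

Lemma persistent_deviation0 eps : 0 < eps ->
  (forall i, cvg_in_prob P (U i a) (theta i) /\ cvg_in_prob P (L i a) (theta i)) ->
  P (persistent_deviation eps) = 0%E.
Proof.
move=> eps_gt0 cvgLU.
apply: measure_bigcap_eq0 (measurable_deviation_at eps) _ => e e_gt0.
have k_gt0 : 0 < k%:R :> R by rewrite ltr0n (leq_ltn_trans (leq0n m) m_lt_k).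
pose del := e / (2 * k%:R).
have del_gt0 : 0 < del by rewrite divr_gt0 // mulr_gt0.
have [N _ smallN] : \forall T \near \oo, forall i,
    (P (deviates eps (L i a T) (theta i)) < del%:E)%E /\
    (P (deviates eps (U i a T) (theta i)) < del%:E)%E.
  apply: filter_forall => i; have [cvgU cvgL] := cvgLU i.
  by apply: filterS2 (cvg_in_prob_eventually_lt cvgL eps_gt0 del_gt0)
    (cvg_in_prob_eventually_lt cvgU eps_gt0 del_gt0) => T.
exists N; have -> : e = k%:R * (del + del) by rewrite /del; field; rewrite gt_eqF.
rewrite -[k in k%:R]card_ord; apply: measure_fin_bigcup_le => i.
  by apply: measurableU; exact: measurable_deviates.
have [devL devU] := smallN N.+1 (leqnSn N) i.
apply: le_trans (measureU2 _ _ _) _; try exact: measurable_deviates.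
by rewrite EFinD leeD // ltW.
Qed.

Let eps := (theta m.-1 - theta m) / 3.

Lemma separated_of_close T w : ~ deviation_at eps T w ->
  forall i j, i \in S -> j \notin S -> (U j a T w < L i a T w)%E.
Proof.
move=> close i j Si Sj.
have /abse_subr_le/andP[_ Uj] : ~ deviates eps (U j a T) (theta j) w.
  by move=> dev; apply: close; exists j => //; right.
have /abse_subr_le/andP[Li _] : ~ deviates eps (L i a T) (theta i) w.
  by move=> dev; apply: close; exists i => //; left.
apply: le_lt_trans Uj (lt_le_trans _ Li); rewrite lte_fin.
have := notin_promising_le m_gt0 m_lt_k theta_nonincr Sj.
have : theta m.-1 <= theta i by move: Si; rewrite inE.
have : eps + eps < theta m.-1 - theta m by rewrite /eps; move: gap; lra.
lra.
Qed.

Lemma SCS_eventually_promising w :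
  ~ (\bigcup_i violation i) w -> ~ persistent_deviation eps w ->
  exists T0, (1 <= T0)%N /\ forall T, (T0 <= T)%N -> Shat T w = S.
Proof.
move=> no_viol /existsNP[T /= close]; exists T.+1; split => // T' TT'.
apply/eqP; rewrite finset.eqEsubset promising_subset_SCS // andbT.
apply: (SCS_subset_separated m_gt0 _ (promising_subset_SCS no_viol T) _ TT').
  by rewrite card_S.
by apply: separated_of_close => dev; apply: close.
Qed.

Lemma prob_SCS_eventually_promising (alpha : R) : k%:R * a <= alpha ->
  (forall i, cvg_in_prob P (U i a) (theta i) /\ cvg_in_prob P (L i a) (theta i)) ->
  ((1 - alpha)%:E <=
    P [set w | exists T0, (1 <= T0)%N /\ forall T, (T0 <= T)%N -> Shat T w = S])%E.
Proof.
move=> ka_le cvgLU; have eps_gt0 : 0 < eps by rewrite /eps; move: gap; lra.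
have mviol : measurable (\bigcup_i violation i).
  exact: fin_bigcup_measurable finite_finset (fun i _ => measurable_violation i).
have mdev := measurable_persistent_deviation eps.
have bad_le : (P (\bigcup_i violation i `|` persistent_deviation eps) <= (k%:R * a)%:E)%E.
  have dev0 : (P (persistent_deviation eps) <= 0)%E by rewrite persistent_deviation0.
  apply: le_trans (measureU2 _ mviol mdev) _.
  by rewrite -[leRHS]adde0; exact: leeD prob_violation_le dev0.
apply: (probability_ge_compl (measurableU _ _ mviol mdev) _ _ bad_le ka_le).
- rewrite (_ : [set w | _] = \bigcup_(T0 in [set n | (0 < n)%N])
      \bigcap_T [set w | (T0 <= T)%N -> Shat T w = S]).
    apply: bigcup_measurable => T0 _; apply: bigcapT_measurable => T.
    exact: (measurable_SCS m_gt0 mL mU T (fun s => (T0 <= T)%N -> s = S)).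
  apply/seteqP; split => w /=.
    by case=> T0 [T0_gt0 eqS]; exists T0 => // T _; exact: eqS.
  by case=> T0 T0_gt0 eqS; exists T0; split => // T; exact: eqS.
- by move=> w /not_orP[no_viol no_dev]; exact: SCS_eventually_promising.
Qed.

End screening.

Theorem theorem1 (R : realType) (d : measure_display) (Omega : measurableType d)
  (P : probability Omega R) (F : nat -> set (set Omega))
  (k m : nat) (alpha : R) (theta : nat -> R)
  (L U : 'I_k -> R -> nat -> Omega -> \bar R) :
  (2 <= k)%N -> (1 <= m)%N -> (m <= k - 1)%N -> 0 < alpha < 1 ->
  (forall i j : nat, (i <= j)%N -> (j < k)%N -> theta j <= theta i) ->
  is_filtration F ->
  (forall (i : 'I_k) (beta : R), 0 < beta < 1 ->
     adapted F (L i beta) /\ adapted F (U i beta)) ->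
  (forall (i : 'I_k) (beta : R) (T : nat) (w : Omega), 0 < beta < 1 ->
     (L i beta T w <= U i beta T w)%E) ->
  (forall (i : 'I_k) (beta : R), 0 < beta < 1 ->
     (P [set w | exists T, (1 <= T)%N /\ ((theta i)%:E <= L i beta T w)%E]
        <= beta%:E)%E /\
     (P [set w | exists T, (1 <= T)%N /\ ((theta i)%:E >= U i beta T w)%E]
        <= beta%:E)%E) ->
  let Shat := SCS m L U (alpha_km k m alpha) in
  let S := promising k m theta in
  (* (a) *)
  P [set w | forall T, (1 <= T)%N -> Shat T w \subset Shat T.-1 w] = 1%E /\
  (* (b) *)
  (theta m < theta m.-1 ->
     ((1 - alpha)%:E <= P [set w | forall T, (1 <= T)%N -> S \subset Shat T w])%E) /\
  (* (c) *)
  (theta m < theta m.-1 ->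
   (forall (i : 'I_k) (beta : R), 0 < beta < 1 ->
      cvg_in_prob P (U i beta) (theta i) /\ cvg_in_prob P (L i beta) (theta i)) ->
     ((1 - alpha)%:E <=
        P [set w | exists T0, (1 <= T0)%N /\ forall T, (T0 <= T)%N -> Shat T w = S])%E).
Proof.
move=> k_ge2 m_gt0 m_le alpha01 theta_nonincr filtF adaptedLU LU crossing Shat S.
have m_lt_k : (m < k)%N by move: k_ge2 m_le; clear; lia.
set a := alpha_km k m alpha.
have a01 : 0 < a < 1 := alpha_km_gt0_lt1 m_gt0 m_lt_k alpha01.
have ka_le : k%:R * a <= alpha.
  by case/andP: alpha01 => alpha_gt0 _; exact: alpha_km_union_le.
have mL i T := adapted_measurable filtF (adaptedLU i a a01).1 T.
have mU i T := adapted_measurable filtF (adaptedLU i a a01).2 T.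
have LUa i T w := LU i a T w a01.
have crossing_a i := crossing i a a01.
split; [|split].
- rewrite [X in P X](_ : _ = setT) ?probability_setT //.
  by apply/seteqP; split => // w _ [|T] // _; exact: SCS_subset_pred.
- by move=> gap; apply: prob_promising_subset_SCS.
- move=> gap cvg; have cvg_a i := cvg i a a01.
  by apply: prob_SCS_eventually_promising.
Qed.
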